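(* Let $Z$ be a regular Hausdorff topological space such that there is an increasing sequence $A_n$, $n\in\mathbb{N}$, of closed subspaces of $Z$, each of which is a separable metric space (under a suitable metric compatible with its relative topology), with $Z=\bigcup_{n\in\mathbb{N}} A_n$. Then there is a countable collection of continuous real-valued functions on $Z$ which separates the points of $Z$. *)

From HB Require Import structures.
From mathcomp Require Import all_boot all_order all_algebra.
From mathcomp Require Import all_classical all_reals all_analysis.
Set Implicit Arguments. Unset Strict Implicit. Unset Printing Implicit Defensive.
Import Order.TTheory GRing.Theory Num.Theory numFieldNormedType.Exports.
Local Open Scope classical_set_scope.
Local Open Scope ring_scope.

Definition metric_on {T : Type} {R : realType} (A : set T) (d : T -> T -> R) : Prop :=
  (forall x y, A x -> A y -> 0 <= d x y) /\
  (forall x y, A x -> A y -> (d x y = 0 <-> x = y)) /\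
  (forall x y, A x -> A y -> d x y = d y x) /\
  (forall x y z, A x -> A y -> A z -> d x z <= d x y + d y z).

(* The metric [d] on [A] induces the relative (subspace) topology of [A]:
   at every point x of A, the relative neighbourhoods of x in A are exactly the
   sets containing the trace on A of some open d-ball around x. *)
Definition metric_compatible_on {T : topologicalType} {R : realType}
  (A : set T) (d : T -> T -> R) : Prop :=
  forall x, A x -> forall U : set T,
    (exists2 V, nbhs x V & V `&` A `<=` U) <->
    (exists2 e : R, 0 < e & forall y, A y -> d x y < e -> U y).

Definition separable_metric_subspace {T : topologicalType} (R : realType)
  (A : set T) : Prop :=
  (exists d : T -> T -> R, metric_on A d /\ metric_compatible_on A d) /\
  (exists D : set T, countable D /\ D `<=` A /\ A `<=` closure D).

From HB Require Import structures.
From mathcomp Require Import all_boot all_order all_algebra.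
From mathcomp Require Import all_classical all_reals all_analysis.
From mathcomp Require Import lra.
Import Order.TTheory GRing.Theory Num.Theory numFieldNormedType.Exports.
Local Open Scope classical_set_scope.
Local Open Scope ring_scope.

(* The traces on A_n of the d_n-balls of radius 1/(k+1) around the points of
   the countable dense sets D_n form a countable network of Z.  A regular
   space with a countable network is normal (the argument behind "regular and
   second countable implies normal" only uses a network), so Urysohn's lemma
   gives, for each such ball, a continuous function vanishing on it and equal
   to 1 off the concentric ball of twice the radius.  Two distinct points lie
   in a common A_n, where one of these countably many functions separates
   them. *)

Lemma exists_natSinv_lt {R : realType} {e : R} : 0 < e ->
  exists k : nat, k.+1%:R^-1 < e.
Proof.
move=> e0; have [k _ /(_ k (leqnn k)) ke] := near_infty_natSinv_lt (PosNum e0).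
by exists k.
Qed.

Definition network {Z : topologicalType} (N : nat -> set Z) :=
  forall x W, open W -> W x -> exists k, N k x /\ N k `<=` W.

Section network.
Context {Z : topologicalType} {N : nat -> set Z}.
Hypotheses (regZ : regular_space Z) (netN : network N).

Lemma network_closure_cover {X Y : set Z} : closed Y -> X `&` Y = set0 ->
  exists U : nat -> set Z, [/\ forall k, open (U k),
    forall k, closure (U k) `&` Y = set0 & X `<=` \bigcup_k U k].
Proof.
move=> cY XY.
pose good k (U : set Z) := [/\ open U, closure U `&` Y = set0 & N k `<=` U].
have pickU k : exists U : set Z,
    [/\ open U, closure U `&` Y = set0 & (exists V, good k V) -> N k `<=` U].
  have [[V gV]|nogood] := pselect (exists V, good k V).
    by case: gV => oV cV NV; exists V.
  by exists set0; rewrite closure0 set0I; split=> [|//|/nogood//]; exact: open0.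
have [U hU] := choice pickU.
exists U; split=> [k|k|x Xx]; try by case: (hU k).
have nYx : ~ Y x by move=> Yx; suff : (X `&` Y) x by rewrite XY.
have [W [V [oW oV Wx YV WV]]] := (regular_openP x).1 (regZ x) Y cY nYx.
have [k [Nkx NkW]] := netN x W oW Wx.
have clW : closure W `&` Y = set0.
  have WcV : W `<=` ~` V by move=> w Ww Vw; suff : (W `&` V) w by rewrite WV.
  have clWcV : closure W `<=` ~` V.
    exact: subset_trans (closureS WcV) (open_closedC oV).
  by rewrite -subset0 => z [/clWcV nVz /YV].
case: (hU k) => _ _ NkU; exists k => //.
by apply: NkU => //; exists W; split.
Qed.

(* Shrink each countable cover against the finite partial unions of the
   closures of the other one. *)
Lemma network_separate_closed (C D : set Z) :
  closed C -> closed D -> C `&` D = set0 ->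
  exists U V, [/\ open U, open V, C `<=` U, D `<=` V & U `&` V = set0].
Proof.
move=> cC cD CD.
have [U [oU cU CU]] := network_closure_cover cD CD.
have [V [oV cV DV]] := network_closure_cover cC (etrans (setIC D C) CD).
pose clU n := \bigcup_(i in `I_n.+1) closure (U i).
pose clV n := \bigcup_(i in `I_n.+1) closure (V i).
have closed_clU n : closed (clU n).
  by apply: closed_bigcup => // i _; exact: closed_closure.
have closed_clV n : closed (clV n).
  by apply: closed_bigcup => // i _; exact: closed_closure.
exists (\bigcup_n (U n `&` ~` clV n)), (\bigcup_n (V n `&` ~` clU n)); split.
- by apply: bigcup_open => n _; apply: openI => //; exact: closed_openC.
- by apply: bigcup_open => n _; apply: openI => //; exact: closed_openC.
- move=> x Cx; have [n _ Unx] := CU x Cx; exists n => //; split=> // -[i _].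
  by move=> clVix; suff : (closure (V i) `&` C) x by rewrite cV.
- move=> x Dx; have [n _ Vnx] := DV x Dx; exists n => //; split=> // -[i _].
  by move=> clUix; suff : (closure (U i) `&` D) x by rewrite cU.
- rewrite -subset0 => x [[n _ [Unx nclVn]] [m _ [Vmx nclUm]]].
  have [nm|mn] := leqP n m.
  + by apply: nclUm; exists n; [rewrite /= ltnS | exact: subset_closure].
  + by apply: nclVn; exists m; [rewrite /= ltnS ltnW | exact: subset_closure].
Qed.

End network.

Lemma normal_urysohn (R : realType) {T : topologicalType} {C D : set T} :
  normal_space T -> closed C -> closed D -> C `&` D = set0 ->
  exists f : T -> R, [/\ continuous f, {in C, f =1 cst 0} & {in D, f =1 cst 1}].
Proof.
move=> nT cC cD CD.
have [f [cf _ fC fD]] := (@uniform_separatorP T R C D).1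
  ((@normal_separatorP R T).1 nT C D cC cD CD).
by exists f; split=> // z /set_mem zC; [apply: fC | apply: fD]; exists z.
Qed.

Definition subspace_ball {Z : Type} {R : realType} (A : set Z)
  (d : Z -> Z -> R) (q : Z) (r : R) := [set z | A z /\ d q z <= r].

Definition subspace_far {Z : Type} {R : realType} (A : set Z)
  (d : Z -> Z -> R) (q : Z) (r : R) := [set z | A z /\ r <= d q z].

Section metric_subspace.
Context {R : realType} {Z : topologicalType} {A : set Z} {d : Z -> Z -> R}.
Hypotheses (cA : closed A) (mA : metric_on A d).
Hypothesis compA : metric_compatible_on A d.

Lemma metric_subspace_closed (C : set Z) : C `<=` A ->
  (forall z, A z -> ~ C z -> exists2 e : R, 0 < e &
     forall w, A w -> d z w < e -> ~ C w) -> closed C.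
Proof.
move=> CA Copen z clCz.
have Az : A z by apply: cA; exact: (closureS CA).
apply: contrapT => nCz.
have [e e0 he] := Copen z Az nCz.
have [V Vz VA] := (compA z Az (~` C)).2 (ex_intro2 _ _ e e0 he).
have [w [Cw Vw]] := clCz V Vz.
exact: VA w (conj Vw (CA w Cw)) Cw.
Qed.

Lemma closed_subspace_ball (q : Z) (r : R) :
  A q -> closed (subspace_ball A d q r).
Proof.
case: mA => _ [_ [dC dtri]] Aq.
apply: metric_subspace_closed => [z []//|z Az nCz].
have rz : r < d q z by rewrite ltNge; apply/negP => ?; apply: nCz.
exists (d q z - r) => [|w Aw]; first by rewrite subr_gt0.
have := dtri q w z Aq Aw Az; rewrite (dC w z Aw Az) => ? ? [_ ?]; lra.
Qed.

Lemma closed_subspace_far (q : Z) (r : R) :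
  A q -> closed (subspace_far A d q r).
Proof.
case: mA => _ [_ [_ dtri]] Aq.
apply: metric_subspace_closed => [z []//|z Az nCz].
have zr : d q z < r by rewrite ltNge; apply/negP => ?; apply: nCz.
exists (r - d q z) => [|w Aw]; first by rewrite subr_gt0.
have := dtri q z w Aq Az Aw => ? ? [_ ?]; lra.
Qed.

Lemma dense_subspace_approx {D : set Z} {x : Z} {e : R} :
  D `<=` A -> A `<=` closure D -> A x -> 0 < e -> exists2 q, D q & d x q < e.
Proof.
move=> DA AD Ax e0.
have [V Vx VA] := (compA x Ax [set y | d x y < e]).2
  (ex_intro2 _ _ e e0 (fun _ _ => id)).
have [q [Dq Vq]] := AD x Ax V Vx.
by exists q => //; apply: VA; split => //; exact: DA.
Qed.

End metric_subspace.

Section separable_cover.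
Context {R : realType} {Z : topologicalType} {A : nat -> set Z}.
Context {d : nat -> Z -> Z -> R} {D : nat -> set Z}.
Hypotheses (metricA : forall n, metric_on (A n) (d n))
  (compA : forall n, metric_compatible_on (A n) (d n))
  (countD : forall n, countable (D n)) (DA : forall n, D n `<=` A n)
  (AD : forall n, A n `<=` closure (D n)) (coverA : \bigcup_n A n = setT).

(* A ball is coded by [(n, (q, k))]: centre [q] in [D n], radius [1/(k+1)]. *)
Definition ball_code := [set j : nat * (Z * nat) | D j.1 j.2.1].

Definition code_radius (j : nat * (Z * nat)) : R := j.2.2.+1%:R^-1.

Definition code_ball (j : nat * (Z * nat)) :=
  [set z | A j.1 z /\ d j.1 j.2.1 z < code_radius j].

Definition code_closed_ball (j : nat * (Z * nat)) :=
  subspace_ball (A j.1) (d j.1) j.2.1 (code_radius j).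

Definition code_far (j : nat * (Z * nat)) :=
  subspace_far (A j.1) (d j.1) j.2.1 (2 * code_radius j).

Lemma code_radius_gt0 j : 0 < code_radius j.
Proof. by rewrite invr_gt0 ltr0Sn. Qed.

Lemma countable_ball_code : countable ball_code.
Proof.
apply: (@sub_countable _ _ _ (setT `*` (\bigcup_n D n `*` setT))).
  apply: subset_card_le => -[n [q k]] /= Dq.
  by split=> //; split=> //; exists n.
by apply: countableX => //; apply: countableX => //; exact: bigcup_countable.
Qed.

Lemma in_some_subspace x : exists n, A n x.
Proof. have [n _ Anx] : (\bigcup_n A n) x by rewrite coverA. by exists n. Qed.

Lemma code_ball_small {x : Z} {W : set Z} : open W -> W x ->
  exists2 j, ball_code j & code_ball j x /\ code_ball j `<=` W.
Proof.
move=> oW Wx; have [n Anx] := in_some_subspace x.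
have [e e0 eW] : exists2 e : R, 0 < e & forall y, A n y -> d n x y < e -> W y.
  by apply/(compA n x Anx); exists W; [exact: open_nbhs_nbhs | move=> y []].
have [k ke] := exists_natSinv_lt (divr_gt0 e0 (ltr0Sn R 1)).
have [q Dq dxq] := dense_subspace_approx (compA n) (DA n) (AD n) Anx
  (code_radius_gt0 (n, (x, k))).
have [_ [_ [dC dtri]]] := metricA n; have Aq := DA n q Dq.
exists (n, (q, k)) => //; split; first by split=> //=; rewrite dC.
move=> y [/= Any dqy]; apply: eW => //.
have := dtri x q y Anx Aq Any; move: dxq dqy ke; rewrite /code_radius /=.
move: (k.+1%:R^-1 : R) => r; lra.
Qed.

Lemma exists_network : exists N : nat -> set Z, network N.
Proof.
have /countable_injP [g ginj] := countable_ball_code.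
exists (fun k => \bigcup_(j in [set j | ball_code j /\ g j = k]) code_ball j).
move=> x W oW Wx; have [j Cj [jx jW]] := code_ball_small oW Wx.
exists (g j); split; first by exists j.
move=> y [i [Ci gij] iy]; apply: jW.
by rewrite -(ginj i j) // inE.
Qed.

Hypothesis monoA : forall n, A n `<=` A n.+1.

Lemma subspace_le {m n : nat} : (m <= n)%N -> A m `<=` A n.
Proof.
move=> mn; apply/subsetPset; move: mn; apply: (nondecreasing_seqP A).1 => k.
exact/subsetPset.
Qed.

Lemma code_separates x y : x <> y ->
  exists2 j, ball_code j & code_closed_ball j x /\ code_far j y.
Proof.
move=> xy; have [[a Aax] [b Aby]] := (in_some_subspace x, in_some_subspace y).
pose n := maxn a b.
have Anx := subspace_le (leq_maxl a b) x Aax.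
have Any := subspace_le (leq_maxr a b) y Aby.
have [dge0 [d0 [dC dtri]]] := metricA n.
have dxy_gt0 : 0 < d n x y.
  by rewrite lt_neqAle dge0 // andbT eq_sym; apply/eqP => /(d0 x y Anx Any).
have [k k3] := exists_natSinv_lt (divr_gt0 dxy_gt0 (ltr0Sn R 2)).
have [q Dq dxq] := dense_subspace_approx (compA n) (DA n) (AD n) Anx
  (code_radius_gt0 (n, (x, k))).
have Aq := DA n q Dq.
exists (n, (q, k)) => //; split; split=> //=; rewrite dC // in dxq *.
  exact: ltW.
have := dtri x q y Anx Aq Any; rewrite (dC x q) //.
move: dxq k3; rewrite /code_radius /=; move: (k.+1%:R^-1 : R) => r; lra.
Qed.

Hypotheses (closedA : forall n, closed (A n)) (normalZ : normal_space Z).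

Lemma code_urysohn j : exists f : Z -> R, continuous f /\ (ball_code j ->
  {in code_closed_ball j, f =1 cst 0} /\ {in code_far j, f =1 cst 1}).
Proof.
have [Cj|nCj] := pselect (ball_code j); last first.
  by exists (cst 0); split=> [|/nCj//]; exact: cst_continuous.
have Aq := DA _ _ Cj; have r0 := code_radius_gt0 j.
have disj : code_closed_ball j `&` code_far j = set0.
  by rewrite -subset0 => z [[_ ?] [_ ?]]; lra.
have [f [cf f0 f1]] := normal_urysohn R normalZ
  (closed_subspace_ball (closedA _) (metricA _) (compA _) _ _ Aq)
  (closed_subspace_far (closedA _) (metricA _) (compA _) _ _ Aq) disj.
by exists f.
Qed.

Lemma separating_continuous_family : exists F : set (Z -> R),
  [/\ countable F, forall f, F f -> continuous f &
      forall x y, x <> y -> exists2 f, F f & f x <> f y].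
Proof.
have [phi phiP] := choice code_urysohn.
exists (phi @` ball_code); split.
- exact: sub_countable (card_image_le phi _) countable_ball_code.
- by move=> _ [j _ <-]; case: (phiP j).
move=> x y xy; have [j Cj [xj yj]] := code_separates x y xy.
exists (phi j); first by exists j.
have [_ /(_ Cj) [phi0 phi1]] := phiP j.
rewrite phi0 ?phi1 ?inE //= => /esym/eqP; exact/negP/oner_neq0.
Qed.

End separable_cover.

Theorem lemma2p2 (R : realType) (Z : topologicalType) (A : nat -> set Z) :
  regular_space Z -> hausdorff_space Z ->
  (forall n, closed (A n)) ->
  (forall n, A n `<=` A n.+1) ->
  (forall n, separable_metric_subspace R (A n)) ->
  \bigcup_n A n = setT ->
  exists F : set (Z -> R),
    countable F /\ (forall f, F f -> continuous f) /\
    (forall x y : Z, x <> y -> exists2 f, F f & f x <> f y).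
Proof.
move=> regZ _ closedA monoA sepA coverA.
have witnesses n : exists dD : (Z -> Z -> R) * set Z,
    [/\ metric_on (A n) dD.1, metric_compatible_on (A n) dD.1,
        countable dD.2, dD.2 `<=` A n & A n `<=` closure dD.2].
  by have [[d [md cd]] [D [cD [DA AD]]]] := sepA n; exists (d, D).
have [dD dDP] := choice witnesses.
pose d n := (dD n).1; pose D n := (dD n).2.
have metricA n : metric_on (A n) (d n) by case: (dDP n).
have compA n : metric_compatible_on (A n) (d n) by case: (dDP n).
have countD n : countable (D n) by case: (dDP n).
have DA n : D n `<=` A n by case: (dDP n).
have AD n : A n `<=` closure (D n) by case: (dDP n).
have [N netN] := exists_network metricA compA countD DA AD coverA.
have normalZ : normal_space Z.
  by apply/(@normal_openP R Z); exact: network_separate_closed regZ netN.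
have [F [countF contF sepF]] := separating_continuous_family metricA compA
  countD DA AD coverA monoA closedA normalZ.
by exists F.
Qed.
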